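(* Let $p$ be an odd prime. Then $$\sum_{k=0}^{[p/4]}\binom{4k}{2k}\frac1{32^k}\equiv\begin{cases}1\pmod p&\text{if }p\equiv\pm1,\pm3\pmod{16},\\-1\pmod p&\text{if }p\equiv\pm5,\pm7\pmod{16}.\end{cases}$$
   Context: $[x]$ is the greatest integer $\le x$. *)

From HB Require Import structures.
From mathcomp Require Import all_boot all_order all_algebra.
Set Implicit Arguments. Unset Strict Implicit. Unset Printing Implicit Defensive.
Import Order.TTheory GRing.Theory Num.Theory.

(* Let p = 2h+1 be an odd prime and r = p mod 16.  The proof has three parts.

   1. Modulo p, 'C(2n, n) = (-4)^n 'C(h, n) for n <= h, so the sum becomes
      T = \sum_k 'C(h, 2k) 2^-k, the even part of the binomial expansion:
      (1 + t)^h + (1 - t)^h = 2 T whenever t^2 = 1/2.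

   2. In an extension L of F_p containing a root z of X^8 + 1, the elements
      c_k = z^k - z^(8-k) (that is, z^k + z^-k, "2 cos(k pi/8)") satisfy
      c_2^2 = 2, c_1 c_3 = c_2, c_1^2 = 2 + c_2, c_3^2 = 2 - c_2.  Taking
      t = c_2 / 2, we get 1 + t = c_1^2 / 2 and 1 - t = c_3^2 / 2, hence
      c_1 (1 + t)^h 2^h = c_1^p, c_3 (1 - t)^h 2^h = c_3^p, c_2 2^h = c_2^p.

   3. The Frobenius map x |-> x^p sends c_k to c_k evaluated at z^r, and
      a finite table computes these values: c_1, c_2, c_3 are fixed or
      negated together, or c_1, c_3 are exchanged up to sign.  Solving for
      T in each case gives T = 1 or T = -1 according to r. *)

From HB Require Import structures.
From mathcomp Require Import all_boot all_order all_algebra all_field.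
From mathcomp Require Import zify ring.
Import GRing.Theory.
Local Open Scope ring_scope.

Set Implicit Arguments.
Unset Strict Implicit.
Unset Printing Implicit Defensive.

Lemma central_binomialS n :
  (n.+1 * 'C(n.+1.*2, n.+1) = 2 * n.*2.+1 * 'C(n.*2, n))%N.
Proof.
have e1 := mul_bin_diag n.*2.+2 n.
have e2 := mul_bin_diag n.*2.+1 n.
have sym : 'C(n.*2.+1, n.+1) = 'C(n.*2.+1, n).
  by rewrite -(bin_sub (_ : n <= n.*2.+1)%N) ?subSn -?addnn ?addnK //; lia.
rewrite /= in e1 e2; rewrite doubleS -e1 -mulnA e2 sym; lia.
Qed.

(* In characteristic p = 2h + 1, 'C(2n, n) = (-4)^n 'C(h, n): the ratios
   2(2n+1)/(n+1) and -4(h-n)/(n+1) of consecutive terms agree modulo p,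
   as 2(2n+1) + 4(h-n) = 2p. *)
Lemma central_binomial_pchar (F : fieldType) p h n :
  p \in [pchar F] -> p = h.*2.+1 -> (n <= h)%N ->
  'C(n.*2, n)%:R = (-4) ^+ n * 'C(h, n)%:R :> F.
Proof.
move=> pch ph; elim: n => [|n IHn] le_nh; first by rewrite !bin0 expr0 mul1r.
have nz : n.+1%:R != 0 :> F.
  by rewrite -(dvdn_pcharf pch); apply/negP => /dvdn_leq; lia.
have p0 : h%:R * 2 + 1 = 0 :> F.
  rewrite -(pcharf0 pch) ph (_ : h.*2.+1 = h * 2 + 1)%N; last lia.
  by rewrite natrD natrM.
apply: (mulfI nz); rewrite -natrM central_binomialS natrM IHn; last lia.
rewrite [RHS]mulrCA -natrM mul_bin_left !natrM natrB; last lia.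
rewrite exprS (_ : n.*2.+1 = n * 2 + 1)%N; last lia.
rewrite natrD natrM; apply/eqP; rewrite -subr_eq0.
rewrite (_ : _ - _ = 2 * (-4) ^+ n * 'C(h, n)%:R * (h%:R * 2 + 1)).
  by rewrite p0 mulr0.
ring.
Qed.

Lemma sum_nat_pairs (R : nmodType) (G : nat -> R) n :
  \sum_(0 <= i < n.*2) G i = \sum_(0 <= k < n) (G k.*2 + G k.*2.+1).
Proof.
elim: n => [|n IHn]; first by rewrite !big_geq.
by rewrite doubleS !big_nat_recr //= IHn -addrA.
Qed.

Definition even_binomial_sum (R : pzSemiRingType) (h : nat) (t2 : R) : R :=
  \sum_(0 <= k < (h %/ 2).+1) 'C(h, k.*2)%:R * t2 ^+ k.

Lemma even_binomial_sumE (R : comPzRingType) (t : R) h :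
  (1 + t) ^+ h + (1 - t) ^+ h = 2 * even_binomial_sum h (t * t).
Proof.
rewrite [1 + t]addrC [1 - t]addrC !exprD1n -big_split /=.
set G := fun i => t ^+ i *+ 'C(h, i) + (-t) ^+ i *+ 'C(h, i).
rewrite -(big_mkord xpredT G).
have le_h : (h.+1 <= (h %/ 2).+1.*2)%N.
  by rewrite -muln2 mulSn; have := leq_divM h 2;
     have := ltn_ceil h (isT : (0 < 2)%N); lia.
have extend : \sum_(0 <= i < h.+1) G i = \sum_(0 <= i < (h %/ 2).+1.*2) G i.
  rewrite [RHS](@big_cat_nat _ _ _ h.+1) //= [X in _ = _ + X]big1_seq ?addr0 //.
  move=> i /andP[_]; rewrite mem_index_iota => /andP[lt_hi _].
  by rewrite /G bin_small // !mulr0n addr0.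
rewrite extend sum_nat_pairs mulr_sumr.
apply: eq_bigr => k _.
have sqr_even (x : R) : x ^+ k.*2 = (x * x) ^+ k by rewrite -mul2n exprM expr2.
rewrite /G exprSr [(-t) ^+ _.+1]exprSr !sqr_even mulrNN mulrN mulNrn addrN.
by rewrite addr0 -mulr2n mulrnAl -mulrnAr mulr_natl mul1r.
Qed.

Lemma two_neq0_pchar (F : fieldType) p h :
  p \in [pchar F] -> p = h.*2.+1 -> 2 != 0 :> F.
Proof.
move=> pch ph; rewrite -[2]/(2%:R) -(dvdn_pcharf pch 2).
by apply/negP => /dvdn_leq; have := prime_gt1 (pcharf_prime pch); lia.
Qed.

(* Modulo p, the sum of the statement is even_binomial_sum h (1/2):
   'C(4k, 2k) = 16^k 'C(h, 2k) and 16/32 = 1/2. *)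
Lemma sum_central_binomial_pchar (F : fieldType) p h :
  p \in [pchar F] -> p = h.*2.+1 ->
  \sum_(0 <= k < (p %/ 4).+1) 'C(4 * k, 2 * k)%:R / 32%:R ^+ k
    = even_binomial_sum h (2^-1 : F).
Proof.
move=> pch ph; have two_nz := two_neq0_pchar pch ph.
have -> : (p %/ 4 = h %/ 2)%N by rewrite ph; lia.
apply: eq_big_nat => k /andP[_ lt_k].
have le_2k_h : (k.*2 <= h)%N by have := leq_divM h 2; lia.
rewrite (_ : (4 * k = k.*2.*2)%N); last lia.
rewrite (_ : (2 * k = k.*2)%N); last lia.
rewrite (central_binomial_pchar pch ph le_2k_h).
have -> : (-4) ^+ k.*2 = 16%:R ^+ k :> F.
  by rewrite -mul2n exprM sqrrN; congr (_ ^+ k); rewrite -natrX.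
rewrite (_ : 32%:R = 16%:R * 2 :> F); last by rewrite -natrM.
rewrite exprMn exprVn.
have a_nz : 16%:R ^+ k != 0 :> F.
  by rewrite expf_neq0 // (_ : 16 = 2 * 2 * 2 * 2)%N ?natrM ?mulf_neq0.
have b_nz : 2 ^+ k != 0 :> F by rewrite expf_neq0.
by field; rewrite a_nz b_nz.
Qed.

(* For z with z^8 = -1 (a primitive 16th root of unity), cosz k z equals
   z^k + z^-k; over the complex numbers it is 2 cos(k pi / 8). *)
Definition cosz (R : pzRingType) (k : nat) (z : R) : R := z ^+ k - z ^+ (8 - k).

Lemma expr_shift8 (R : pzRingType) (z : R) n :
  z ^+ 8 = -1 -> z ^+ n.+4.+4 = - z ^+ n.
Proof.
move=> z8; rewrite (_ : n.+4.+4 = n + 8)%N; last by rewrite addnC.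
by rewrite exprD z8 mulrN1.
Qed.

Lemma cosz_relations (R : comPzRingType) (z : R) : z ^+ 8 = -1 ->
  [/\ cosz 2 z * cosz 2 z = 2, cosz 1 z * cosz 3 z = cosz 2 z,
      cosz 1 z * cosz 1 z = 2 + cosz 2 z & cosz 3 z * cosz 3 z = 2 - cosz 2 z].
Proof.
move=> z8; rewrite /cosz /=.
by split; rewrite !mulrBl !mulrBr -!exprD /= ?(expr_shift8 _ z8) ?expr0; ring.
Qed.

Lemma cosz_table (R : comPzRingType) (z : R) r :
  z ^+ 8 = -1 -> odd r -> (r < 16)%N ->
  let e : R := if r \in [:: 1; 15; 3; 13]%N then 1 else -1 in
  let y := z ^+ r in
  if r \in [:: 1; 15; 7; 9]%N
  then [/\ cosz 2 y = cosz 2 z, cosz 1 y = e * cosz 1 z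
         & cosz 3 y = e * cosz 3 z]
  else [/\ cosz 2 y = - cosz 2 z, cosz 1 y = e * cosz 3 z
         & cosz 3 y = - (e * cosz 1 z)].
Proof.
move=> z8; rewrite /cosz.
do 16?[case: r => [|r] //] => _ _ /=.
all: by rewrite -!exprM ?mul1n ?(expr_shift8 _ z8) ?opprK; split; ring.
Qed.

Lemma cosz_pchar (R : comNzRingType) p (z : R) k :
  p \in [pchar R] -> cosz k z ^+ p = cosz k (z ^+ p).
Proof.
move=> pch; rewrite /cosz -!(pFrobenius_autE pch) rmorphB !rmorphXn.
by rewrite !pFrobenius_autE.
Qed.

Lemma expr_odd_sqr (R : comPzRingType) (x y c : R) h :
  x * x = c * y -> x * y ^+ h * c ^+ h = x ^+ h.*2.+1.
Proof.
move=> sqr_x; rewrite -mulrA -exprMn [y * c]mulrC -sqr_x.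
by rewrite -expr2 -exprM mul2n exprS.
Qed.

(* Solving for T when the Frobenius fixes cosz 2 (so 2^h = 1): then
   (1 + t)^h and (1 - t)^h both equal the sign e. *)
Lemma half_sum_fixed (F : fieldType) (u w s A B E T e : F) :
  2 != 0 :> F -> s * s = 2 -> u * w = s -> A + B = 2 * T ->
  s * E = s -> u * A * E = e * u -> w * B * E = e * w -> T = e.
Proof.
move=> two_nz ss uw sumAB sE uAE wBE.
have s_nz : s != 0 by apply: contraNneq two_nz => s0; rewrite -ss s0 mul0r.
have E1 : E = 1 by apply: (mulfI s_nz); rewrite sE mulr1.
have u_nz : u != 0 by apply: contraNneq s_nz => u0; rewrite -uw u0 mul0r.
have w_nz : w != 0 by apply: contraNneq s_nz => w0; rewrite -uw w0 mulr0.
have A_e : A = e by apply: (mulfI u_nz); rewrite -[u * A]mulr1 -E1 uAE mulrC.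
have B_e : B = e by apply: (mulfI w_nz); rewrite -[w * B]mulr1 -E1 wBE mulrC.
by apply: (mulfI two_nz); rewrite -sumAB A_e B_e mulr2n mulrDl mul1r.
Qed.

(* Solving for T when the Frobenius negates cosz 2 (so 2^h = -1):
   2 T s = (u A) w + (w B) u = e (u^2 - w^2) = 2 e s. *)
Lemma half_sum_swapped (F : fieldType) (u w s A B E T e : F) :
  2 != 0 :> F -> s * s = 2 -> u * w = s -> u * u = 2 + s -> w * w = 2 - s ->
  A + B = 2 * T ->
  s * E = - s -> u * A * E = e * w -> w * B * E = - (e * u) -> T = e.
Proof.
move=> two_nz ss uw uu ww sumAB sE uAE wBE.
have s_nz : s != 0 by apply: contraNneq two_nz => s0; rewrite -ss s0 mul0r.
have E_N1 : E = -1 by apply: (mulfI s_nz); rewrite sE mulrN1.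
rewrite E_N1 !mulrN1 in uAE wBE.
have doubled : 2 * T * s = e * (u * u - w * w).
  have -> : 2 * T * s = - (- (u * A) * w) - (- (w * B)) * u.
    by rewrite -sumAB -uw; ring.
  by rewrite uAE wBE; ring.
apply: (mulfI two_nz); apply: (mulIf s_nz).
by rewrite doubled uu ww; ring.
Qed.

Lemma even_binomial_sum_half (L : fieldType) p h (z : L) :
  p \in [pchar L] -> p = h.*2.+1 -> z ^+ 8 = -1 ->
  even_binomial_sum h (2^-1 : L)
    = if (p %% 16 \in [:: 1; 15; 3; 13])%N then 1 else -1.
Proof.
move=> pch ph z8; have two_nz := two_neq0_pchar pch ph.
have [ss uw uu ww] := cosz_relations z8.
set u := cosz 1 z in uw uu *; set w := cosz 3 z in uw ww *.
set s := cosz 2 z in ss uw uu ww *.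
pose t := s / 2.
have tt : t * t = 2^-1 by rewrite mulrACA ss mulrA divff // mul1r.
have sumAB := even_binomial_sumE t h; rewrite tt in sumAB.
have frob_u : u * (1 + t) ^+ h * 2 ^+ h = u ^+ p.
  by rewrite ph; apply: expr_odd_sqr; rewrite uu /t; field.
have frob_w : w * (1 - t) ^+ h * 2 ^+ h = w ^+ p.
  by rewrite ph; apply: expr_odd_sqr; rewrite ww /t; field.
have frob_s : s * 2 ^+ h = s ^+ p.
  by rewrite ph -(expr_odd_sqr h (_ : s * s = 2 * 1)) ?expr1n ?mulr1.
have z16 : z ^+ 16 = 1 by rewrite (_ : 16 = 8 * 2)%N // exprM z8 sqrrN expr1n.
have zp : z ^+ p = z ^+ (p %% 16) by rewrite (expr_mod _ z16).
have r_odd : odd (p %% 16) by rewrite odd_mod // ph /= odd_double.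
have /= := cosz_table z8 r_odd (ltn_mod p 16).
rewrite -zp -!(cosz_pchar _ _ pch) -/u -/w -/s -frob_u -frob_w -frob_s.
case: ifP => _ [sE uAE wBE].
- exact: half_sum_fixed two_nz ss uw sumAB sE uAE wBE.
- exact: half_sum_swapped two_nz ss uw uu ww sumAB sE uAE wBE.
Qed.

Lemma exists_root_opp1 (F : finFieldType) n : (0 < n)%N ->
  exists (L : fieldExtType F) (z : L), z ^+ n = -1.
Proof.
move=> n_gt0; pose q : {poly F} := 'X^n + 1%:P.
have size_q : size q = n.+1 by rewrite size_XnaddC.
have q_nz : q != 0 by rewrite -size_poly_eq0 size_q.
have [L [zs Dq _]] := FinSplittingFieldFor q_nz.
have rootE (z : L) : root (map_poly (in_alg L) q) z = (z ^+ n == -1).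
  rewrite /root rmorphD /= map_polyXn map_polyC /= scale1r.
  by rewrite hornerD hornerXn hornerC addr_eq0.
case: zs Dq => [|z zs] Dq.
  move: (eqp_size Dq); rewrite big_nil size_poly1 size_map_poly size_q.
  by move=> [n0]; rewrite n0 in n_gt0.
exists L, z; apply/eqP; rewrite -rootE (eqp_root Dq) root_prod_XsubC.
exact: mem_head.
Qed.

Theorem corollary2p3 (p : nat) (hp : prime p) (hodd : odd p) :
  let S : 'F_p := \sum_(0 <= k < (p %/ 4).+1)
                    ('C(4 * k, 2 * k))%:R / (32%:R ^+ k) in
  ((p %% 16 \in [:: 1; 15; 3; 13])%N -> S = 1) /\
  ((p %% 16 \in [:: 5; 11; 7; 9])%N -> S = -1).
Proof.
move=> S; pose h := (p %/ 2)%N.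
have ph : p = h.*2.+1.
  by have := odd_double_half p; rewrite hodd /h divn2; lia.
have [L [z z8]] := exists_root_opp1 'F_p (isT : (0 < 8)%N).
have pchL : p \in [pchar L] by rewrite pchar_lalg pchar_Fp.
have S_val : S = if (p %% 16 \in [:: 1; 15; 3; 13])%N then 1 else -1.
  apply: (fmorph_inj (in_alg L)); rewrite fun_if rmorph1 rmorphN1.
  rewrite -(even_binomial_sum_half pchL ph z8).
  rewrite -(sum_central_binomial_pchar pchL ph).
  rewrite rmorph_sum; apply: eq_bigr => k _.
  by rewrite rmorphM fmorphV rmorphXn !rmorph_nat.
split=> r_in; rewrite S_val.
- by rewrite r_in.
- suff -> : (p %% 16 \in [:: 1; 15; 3; 13])%N = false by [].
  by move: r_in; rewrite !inE; case/or4P => /eqP ->.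
Qed.
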